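(* Let $\Phi\triangleright\Gamma\vdash^{(b,e,m,f)}t:\sigma$ be a tight derivation of system $\mathscr{E}$ (i.e. $\mathrm{tight}(\Gamma)$ and $\mathrm{tight}(\sigma)$). Then $t\in\mathcal{M}$ if and only if $b=e=m=0$.
   Context: Pair pattern calculus: patterns $p,q ::= x\mid\langle p,q\rangle$ (linear); $\mathrm{var}(p)$ = variables of $p$; $p\# q$ means disjoint variables. Terms $t,u ::= x\mid\lambda p.t\mid\langle t,u\rangle\mid t\,u\mid t[p/u]$, $\mathrm{var}(p)$ bound in $t$ in $\lambda p.t$ and $t[p/u]$; terms modulo $\alpha$. Canonical forms $\mathcal{M} ::= \lambda p.\mathcal{M}\mid\langle t,t\rangle\mid\mathcal{M}[\langle p_1,p_2\rangle/\mathcal{N}]\mid\mathcal{N}$; pure canonical forms $\mathcal{N} ::= x\mid\mathcal{N}\,t\mid\mathcal{N}[\langle p_1,p_2\rangle/\mathcal{N}]$. System $\mathscr{E}$. Types: tight types $\mathtt{t} ::= \bullet_{\mathcal{N}}\mid\bullet_{\mathcal{M}}$; types $\sigma ::= \mathtt{t}\mid \mathcal{A}_1\times\mathcal{A}_2\mid \mathcal{A}\to\sigma$; multi-types $\mathcal{A} ::= [\sigma_k]_{k\in K}$ (finite, possibly empty $[\,]$). Contexts map variables to multi-types, $\mathrm{dom}(\Gamma)$ = variables with non-empty multi-type; $\wedge$ pointwise multiset union; $\Gamma|_p$ restriction to $\mathrm{var}(p)$; $\Gamma\setminus\mathrm{var}(p)$ removal. $\mathrm{tight}(\sigma)$ iff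 $\sigma\in\{\bullet_{\mathcal{N}},\bullet_{\mathcal{M}}\}$, extended elementwise to multi-types and contexts. Rules: (pat_v) $x:\mathcal{A}\Vdash^{(1,0,0)} x:\mathcal{A}$. (pat_×) from $\Gamma\Vdash^{(e_p,m_p,f_p)}p:\mathcal{A}$, $\Delta\Vdash^{(e_q,m_q,f_q)}q:\mathcal{B}$, $p\#q$ infer $\Gamma\wedge\Delta\Vdash^{(e_p+e_q,1+m_p+m_q,f_p+f_q)}\langle p,q\rangle:[\mathcal{A}\times\mathcal{B}]$. (pat_p) if $\mathrm{dom}(\Gamma)\subseteq\mathrm{var}(\langle p,q\rangle)$ and $\mathrm{tight}(\Gamma)$ then $\Gamma\Vdash^{(0,0,1)}\langle p,q\rangle:[\bullet_{\mathcal{N}}]$. (ax) $x:[\sigma]\vdash^{(0,0,0,0)}x:\sigma$. (abs) from $\Gamma\vdash^{(b,e,m,f)}t:\sigma$ and $\Gamma|_p\Vdash^{(e_p,m_p,f_p)}p:\mathcal{A}$ infer $\Gamma\setminus\mathrm{var}(p)\vdash^{(b+1,e+e_p,m+m_p,f+f_p)}\lambda p.t:\mathcal{A}\to\sigma$. (abs_p) from $\Gamma\vdash^{(b,e,m,f)}t:\mathtt{t}$ ($\mathtt{t}$ tight) and $\mathrm{tight}(\Gamma|_p)$ infer $\Gamma\setminus\mathrm{var}(p)\vdash^{(b,e,m,f+1)}\lambda p.t:\bullet_{\mathcal{M}}$. (many) from $(\Gamma_k\vdash^{(b_k,e_k,m_k,f_k)}t:\sigma_k)_{k\in K}$ infer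 $\wedge_k\Gamma_k\vdash^{(\sum b_k,\sum e_k,\sum m_k,\sum f_k)}t:[\sigma_k]_{k\in K}$. (app) from $\Gamma\vdash^{(b_t,e_t,m_t,f_t)}t:\mathcal{A}\to\sigma$, $\Delta\vdash^{(b_u,e_u,m_u,f_u)}u:\mathcal{A}$ infer $\Gamma\wedge\Delta\vdash^{(b_t+b_u,e_t+e_u,m_t+m_u,f_t+f_u)}t\,u:\sigma$. (app_p) from $\Gamma\vdash^{(b,e,m,f)}t:\bullet_{\mathcal{N}}$ infer $\Gamma\vdash^{(b,e,m,f+1)}t\,u:\bullet_{\mathcal{N}}$. (pair) from $\Gamma\vdash^{(b_t,e_t,m_t,f_t)}t:\mathcal{A}$, $\Delta\vdash^{(b_u,e_u,m_u,f_u)}u:\mathcal{B}$ infer $\Gamma\wedge\Delta\vdash^{(b_t+b_u,e_t+e_u,m_t+m_u,f_t+f_u)}\langle t,u\rangle:\mathcal{A}\times\mathcal{B}$. (pair_p) $\vdash^{(0,0,0,1)}\langle t,u\rangle:\bullet_{\mathcal{M}}$. (match) from $\Gamma\vdash^{(b_t,e_t,m_t,f_t)}t:\sigma$, $\Gamma|_p\Vdash^{(e_p,m_p,f_p)}p:\mathcal{A}$, $\Delta\vdash^{(b_u,e_u,m_u,f_u)}u:\mathcal{A}$ infer $(\Gamma\setminus\mathrm{var}(p))\wedge\Delta\vdash^{(b_t+b_u,e_t+e_u+e_p,m_t+m_u+m_p,f_t+f_u+f_p)}t[p/u]:\sigma$. A derivation of $\Gamma\vdash^{(b,e,m,f)}t:\sigma$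 is tight if $\mathrm{tight}(\Gamma)$ and $\mathrm{tight}(\sigma)$. *)

From mathcomp Require Import all_boot.
Set Implicit Arguments. Unset Strict Implicit. Unset Printing Implicit Defensive.

Definition vname := nat.

Inductive pat : Type := PVar (x : vname) | PPair (p q : pat).

Fixpoint pvars (p : pat) : seq vname :=
  match p with PVar x => [:: x] | PPair p q => pvars p ++ pvars q end.

Definition pat_linear (p : pat) : bool := uniq (pvars p).
Definition pdisj (p q : pat) : bool := all (fun x => x \notin pvars q) (pvars p).

Inductive term : Type :=
| Var (x : vname)
| Lam (p : pat) (t : term)
| Pair (t u : term)
| App (t u : term)
| Sub (t : term) (p : pat) (u : term).   (* Sub t p u  =  t[p/u] *)

Fixpoint term_linear (t : term) : Prop :=
  match t with
  | Var _ => True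
  | Lam p t => pat_linear p /\ term_linear t
  | Pair t u => term_linear t /\ term_linear u
  | App t u => term_linear t /\ term_linear u
  | Sub t p u => pat_linear p /\ term_linear t /\ term_linear u
  end.

(* canonical forms M and pure canonical forms N *)
Inductive canonical : term -> Prop :=
| can_lam p t : canonical t -> canonical (Lam p t)
| can_pair t u : canonical (Pair t u)
| can_sub t p1 p2 u : canonical t -> pure_canonical u ->
    canonical (Sub t (PPair p1 p2) u)
| can_pure t : pure_canonical t -> canonical t
with pure_canonical : term -> Prop :=
| pure_var x : pure_canonical (Var x)
| pure_app t u : pure_canonical t -> pure_canonical (App t u)
| pure_sub t p1 p2 u : pure_canonical t -> pure_canonical u ->
    pure_canonical (Sub t (PPair p1 p2) u).

(* types: tight types bullet_N (TN), bullet_M (TM); products; arrows.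
   Multi-types are finite multisets, represented by lists taken up to
   permutation (and recursively up to equivalence of their elements). *)
Inductive ty : Type :=
| TN
| TM
| TProd (A B : seq ty)
| TArr (A : seq ty) (s : ty).

Definition mty := seq ty.

Inductive ty_eq : ty -> ty -> Prop :=
| teN : ty_eq TN TN
| teM : ty_eq TM TM
| teProd A1 A2 B1 B2 : mty_eq A1 B1 -> mty_eq A2 B2 -> ty_eq (TProd A1 A2) (TProd B1 B2)
| teArr A B s s' : mty_eq A B -> ty_eq s s' -> ty_eq (TArr A s) (TArr B s')
with mty_eq : mty -> mty -> Prop :=
| meNil : mty_eq [::] [::]
| meCons s s' A B : ty_eq s s' -> mty_eq A B -> mty_eq (s :: A) (s' :: B)
| meSwap s s' A : mty_eq (s :: s' :: A) (s' :: s :: A)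
| meTrans A B C : mty_eq A B -> mty_eq B C -> mty_eq A C.

Definition tightb (s : ty) : bool :=
  match s with TN | TM => true | _ => false end.

(* contexts: variables to multi-types; dom = variables with non-empty multi-type *)
Definition ctx := vname -> mty.
Definition ctx_empty : ctx := fun _ => [::].
Definition ctx_single (x : vname) (A : mty) : ctx :=
  fun y => if y == x then A else [::].
Definition ctx_and (G D : ctx) : ctx := fun x => G x ++ D x.
Definition ctx_restr (G : ctx) (p : pat) : ctx :=
  fun x => if x \in pvars p then G x else [::].
Definition ctx_remove (G : ctx) (p : pat) : ctx :=
  fun x => if x \in pvars p then [::] else G x.
Definition tight_ctx (G : ctx) : Prop := forall x, all tightb (G x).
Definition ctx_eq (G G' : ctx) : Prop := forall x, mty_eq (G x) (G' x).

Inductive ptyping : ctx -> pat -> mty -> nat -> nat -> nat -> Prop :=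
| pat_v x A : ptyping (ctx_single x A) (PVar x) A 1 0 0
| pat_x G D p q A B ep mp fp eq mq fq :
    ptyping G p A ep mp fp -> ptyping D q B eq mq fq -> pdisj p q ->
    ptyping (ctx_and G D) (PPair p q) [:: TProd A B] (ep + eq) (1 + mp + mq) (fp + fq)
| pat_p G p q :
    (forall x, G x <> [::] -> x \in pvars (PPair p q)) -> tight_ctx G ->
    ptyping G (PPair p q) [:: TN] 0 0 1.

Inductive typing : ctx -> term -> ty -> nat -> nat -> nat -> nat -> Prop :=
| ty_ax x s : typing (ctx_single x [:: s]) (Var x) s 0 0 0 0
| ty_abs G t s p A b e m f ep mp fp :
    typing G t s b e m f -> ptyping (ctx_restr G p) p A ep mp fp ->
    typing (ctx_remove G p) (Lam p t) (TArr A s) (b + 1) (e + ep) (m + mp) (f + fp)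
| ty_abs_p G t s p b e m f :
    typing G t s b e m f -> tightb s -> tight_ctx (ctx_restr G p) ->
    typing (ctx_remove G p) (Lam p t) TM b e m (f + 1)
| ty_app G D t u A s bt et mt ft bu eu mu fu :
    typing G t (TArr A s) bt et mt ft -> mtyping D u A bu eu mu fu ->
    typing (ctx_and G D) (App t u) s (bt + bu) (et + eu) (mt + mu) (ft + fu)
| ty_app_p G t u b e m f :
    typing G t TN b e m f -> typing G (App t u) TN b e m (f + 1)
| ty_pair G D t u A B bt et mt ft bu eu mu fu :
    mtyping G t A bt et mt ft -> mtyping D u B bu eu mu fu ->
    typing (ctx_and G D) (Pair t u) (TProd A B) (bt + bu) (et + eu) (mt + mu) (ft + fu)
| ty_pair_p t u : typing ctx_empty (Pair t u) TM 0 0 0 1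
| ty_match G D t p u s A bt et mt ft ep mp fp bu eu mu fu :
    typing G t s bt et mt ft -> ptyping (ctx_restr G p) p A ep mp fp ->
    mtyping D u A bu eu mu fu ->
    typing (ctx_and (ctx_remove G p) D) (Sub t p u) s
      (bt + bu) (et + eu + ep) (mt + mu + mp) (ft + fu + fp)
(* multisets are taken up to permutation: identify equivalent contexts/types *)
| ty_conv G G' t s s' b e m f :
    typing G t s b e m f -> ctx_eq G G' -> ty_eq s s' -> typing G' t s' b e m f
with mtyping : ctx -> term -> mty -> nat -> nat -> nat -> nat -> Prop :=
| many_nil t : mtyping ctx_empty t [::] 0 0 0 0
| many_cons G D t s A b e m f b' e' m' f' :
    typing G t s b e m f -> mtyping D t A b' e' m' f' ->
    mtyping (ctx_and G D) t (s :: A) (b + b') (e + e') (m + m') (f + f').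

From Pilot Require Import Defs.
From mathcomp Require Import all_boot zify.

Scheme typing_mut := Induction for typing Sort Prop
with mtyping_mut := Induction for mtyping Sort Prop.
Combined Scheme typing_mtyping_mut from typing_mut, mtyping_mut.

Set Implicit Arguments.
Unset Strict Implicit.

(* In a tight derivation, a pure canonical form can only receive a tight type
   from a tight context, so its derivation uses only the rules (ax), (app_p)
   and (pat_p), none of which increments b, e or m; a canonical form of tight
   type is typed by persistent rules around such pure pieces.  Conversely, if
   b = e = m = 0 then no (abs), (pat_v) or (pat_x) rule occurs: every
   substitution pattern is a pair typed [•N] by (pat_p), which forces its
   argument to be typed •N and hence to be pure canonical, and without (abs)
   no subterm gets an arrow type, so no application is typed by (app). *)

Definition arrowb (s : ty) : bool := if s is TArr _ _ then true else false.

Lemma ty_eq_tightb s s' : ty_eq s s' -> tightb s = tightb s'.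
Proof. by case. Qed.

Lemma ty_eq_arrowb s s' : ty_eq s s' -> arrowb s = arrowb s'.
Proof. by case. Qed.

Lemma ty_eq_TN s s' : ty_eq s s' -> s' = TN -> s = TN.
Proof. by case. Qed.

Lemma mty_eq_all_tightb A B : mty_eq A B -> all tightb A = all tightb B.
Proof.
elim=> //= [s s' {}A {}B /ty_eq_tightb -> _ -> // | s s' {}A | ? ? ? _ -> //].
by rewrite andbCA.
Qed.

Lemma tight_ctx_eq G G' : ctx_eq G G' -> tight_ctx G' -> tight_ctx G.
Proof. by move=> EG HG' x; rewrite (mty_eq_all_tightb (EG x)). Qed.

Lemma tight_ctx_and G D :
  tight_ctx (ctx_and G D) <-> tight_ctx G /\ tight_ctx D.
Proof.
split=> [HGD | [HG HD] x]; last by rewrite /ctx_and all_cat HG HD.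
by split=> x; have /[!all_cat]/andP[] := HGD x.
Qed.

Lemma tight_ctx_remove_restr G p :
  tight_ctx (ctx_remove G p) -> tight_ctx (ctx_restr G p) -> tight_ctx G.
Proof.
move=> Hrem Hres x; have := Hrem x; have := Hres x.
by rewrite /ctx_remove /ctx_restr; case: (x \in pvars p).
Qed.

Lemma tight_ctx_single x s : tight_ctx (ctx_single x [:: s]) -> tightb s.
Proof. by move=> /(_ x); rewrite /ctx_single eqxx /= andbT. Qed.

Lemma ptyping_pair_tight G p q A e m f :
  ptyping G (PPair p q) A e m f -> all tightb A ->
  [/\ e = 0, m = 0 & tight_ctx G].
Proof. by move=> Hp; inversion Hp; subst. Qed.

Lemma ptyping_counters0 G p A e m f :
  ptyping G p A e m f -> e = 0 -> m = 0 ->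
  [/\ exists p1 p2, p = PPair p1 p2, A = [:: TN] & tight_ctx G].
Proof. by case=> *; [lia | lia | split; first by eexists; eexists]. Qed.

Lemma canonical_Lam_inv p t : canonical (Lam p t) -> canonical t.
Proof. by move=> H; inversion H; subst=> //; inversion H0. Qed.

Lemma canonical_App_inv t u : canonical (App t u) -> pure_canonical (App t u).
Proof. by move=> H; inversion H. Qed.

Lemma canonical_Sub_inv t p u : canonical (Defs.Sub t p u) ->
  [/\ exists p1 p2, p = PPair p1 p2, pure_canonical u & canonical t].
Proof.
move=> H; inversion H; subst; first by split=> //; eexists; eexists.
by inversion H0; subst; split; [eexists; eexists | | apply: can_pure].
Qed.

Lemma pure_canonical_App_inv t u : pure_canonical (App t u) -> pure_canonical t.
Proof. by move=> H; inversion H. Qed.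

Lemma pure_canonical_Sub_inv t p u : pure_canonical (Defs.Sub t p u) ->
  [/\ exists p1 p2, p = PPair p1 p2, pure_canonical u & pure_canonical t].
Proof. by move=> H; inversion H; subst; split=> //; eexists; eexists. Qed.

Lemma pure_canonical_typing_mtyping :
  (forall G t s b e m f, typing G t s b e m f -> tight_ctx G ->
     pure_canonical t -> [/\ tightb s, b = 0, e = 0 & m = 0]) /\
  (forall G t A b e m f, mtyping G t A b e m f -> tight_ctx G ->
     pure_canonical t -> [/\ all tightb A, b = 0, e = 0 & m = 0]).
Proof.
apply: (typing_mtyping_mut
  (fun G t s b e m f _ => tight_ctx G -> pure_canonical t ->
     [/\ tightb s, b = 0, e = 0 & m = 0])
  (fun G t A b e m f _ => tight_ctx G -> pure_canonical t ->
     [/\ all tightb A, b = 0, e = 0 & m = 0])).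
- by move=> x s /tight_ctx_single.
- by move=> > _ _ _ _ Hc; inversion Hc.
- by move=> > _ _ _ _ _ Hc; inversion Hc.
- by move=> > _ IHt _ _ /tight_ctx_and[HG _] /pure_canonical_App_inv/(IHt HG)[].
- by move=> > _ IHt HG /pure_canonical_App_inv/(IHt HG)[].
- by move=> > _ _ _ _ _ Hc; inversion Hc.
- by move=> > _ Hc; inversion Hc.
- move=> > _ IHt Hp _ IHu /tight_ctx_and[Hrem HD] /pure_canonical_Sub_inv.
  case=> [[p1 [p2 Ep]] Hu Ht]; subst.
  have [HA -> -> ->] := IHu HD Hu.
  have [-> -> Hres] := ptyping_pair_tight Hp HA.
  have [Hs -> -> ->] := IHt (tight_ctx_remove_restr Hrem Hres) Ht.
  by split.
- move=> > _ IH EG Es HG' Hc; rewrite -(ty_eq_tightb Es).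
  exact: IH (tight_ctx_eq EG HG') Hc.
- by [].
- move=> > _ IHt _ IHm /tight_ctx_and[HG HD] Hc.
  have [Hs -> -> ->] := IHt HG Hc; have [HA -> -> ->] := IHm HD Hc.
  by rewrite /= Hs HA.
Qed.

Lemma pure_canonical_typing G t s b e m f :
  typing G t s b e m f -> tight_ctx G -> pure_canonical t ->
  [/\ tightb s, b = 0, e = 0 & m = 0].
Proof. exact: pure_canonical_typing_mtyping.1. Qed.

Lemma pure_canonical_mtyping G t A b e m f :
  mtyping G t A b e m f -> tight_ctx G -> pure_canonical t ->
  [/\ all tightb A, b = 0, e = 0 & m = 0].
Proof. exact: pure_canonical_typing_mtyping.2. Qed.

Lemma canonical_typing_counters0 G t s b e m f :
  typing G t s b e m f -> tight_ctx G -> tightb s -> canonical t ->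
  [/\ b = 0, e = 0 & m = 0].
Proof.
move: G t s b e m f; apply: (typing_mut
  (fun G t s b e m f _ => tight_ctx G -> tightb s -> canonical t ->
     [/\ b = 0, e = 0 & m = 0])
  (fun _ _ _ _ _ _ _ _ => True)) => //.
- move=> > _ IH Hs Hres Hrem _ /canonical_Lam_inv Hc.
  have [-> -> ->] := IH (tight_ctx_remove_restr Hrem Hres) Hs Hc.
  by split.
- move=> > Ht _ Hu _ HGD _ /canonical_App_inv Hc.
  by have [] := pure_canonical_typing (ty_app Ht Hu) HGD Hc.
- move=> > Ht _ HG _ /canonical_App_inv Hc.
  by have [] := pure_canonical_typing (ty_app_p _ Ht) HG Hc.
- move=> > _ IHt Hp Hu _ /tight_ctx_and[Hrem HD] Hs /canonical_Sub_inv.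
  case=> [[p1 [p2 Ep]] Hpu Hct]; subst.
  have [HA -> -> ->] := pure_canonical_mtyping Hu HD Hpu.
  have [-> -> Hres] := ptyping_pair_tight Hp HA.
  have [-> -> ->] := IHt (tight_ctx_remove_restr Hrem Hres) Hs Hct.
  by split.
- move=> > _ IH EG Es HG' Hs'.
  exact: IH (tight_ctx_eq EG HG') (etrans (ty_eq_tightb Es) Hs').
Qed.

Lemma typing_counters0_canonical G t s b e m f :
  typing G t s b e m f -> tight_ctx G -> b = 0 -> e = 0 -> m = 0 ->
  [/\ canonical t, s = TN -> pure_canonical t & ~~ arrowb s].
Proof.
move: G t s b e m f; apply: (typing_mut
  (fun G t s b e m f _ => tight_ctx G -> b = 0 -> e = 0 -> m = 0 ->
     [/\ canonical t, s = TN -> pure_canonical t & ~~ arrowb s])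
  (fun G t A b e m f _ => tight_ctx G -> b = 0 -> e = 0 -> m = 0 ->
     A = [:: TN] -> pure_canonical t)).
- move=> x s /tight_ctx_single Hs _ _ _.
  by split; [apply/can_pure/pure_var | move=> _; apply: pure_var | case: s Hs].
- by move=> *; lia.
- move=> > _ IH _ Hres Hrem b0 e0 m0.
  have [Hc _ _] := IH (tight_ctx_remove_restr Hrem Hres) b0 e0 m0.
  by split=> //; apply: can_lam.
- move=> > _ IHt _ _ /tight_ctx_and[HG _] *.
  by have [] := IHt HG ltac:(lia) ltac:(lia) ltac:(lia).
- move=> G t u b e m f _ IH HG b0 e0 m0; have [_ Ht _] := IH HG b0 e0 m0.
  have Hp : pure_canonical (App t u) by apply/pure_app/Ht.
  by split=> //; apply: can_pure.
- by split=> //; apply: can_pair.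
- by split=> //; apply: can_pair.
- move=> > _ IHt Hp _ IHu /tight_ctx_and[Hrem HD] b0 e0 m0.
  have [[p1 [p2 Ep]] EA Hres] := ptyping_counters0 Hp ltac:(lia) ltac:(lia).
  have HG := tight_ctx_remove_restr Hrem Hres.
  have [Hct Hpt Hs] := IHt HG ltac:(lia) ltac:(lia) ltac:(lia).
  have Hpu := IHu HD ltac:(lia) ltac:(lia) ltac:(lia) EA.
  by rewrite Ep; split=> [|/Hpt Ht|//]; [apply: can_sub | apply: pure_sub].
- move=> > _ IH EG Es HG' b0 e0 m0.
  have [Hc Hpt Hs] := IH (tight_ctx_eq EG HG') b0 e0 m0.
  by rewrite -(ty_eq_arrowb Es); split=> // /(ty_eq_TN Es).
- by [].
- move=> > _ IHt _ _ /tight_ctx_and[HG _] ? ? ? [Es _].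
  by have [_ Ht _] := IHt HG ltac:(lia) ltac:(lia) ltac:(lia); apply: Ht Es.
Qed.

Theorem lemma4 (G : ctx) (t : term) (s : ty) (b e m f : nat) :
  term_linear t ->
  typing G t s b e m f -> tight_ctx G -> tightb s ->
  (canonical t <-> (b = 0 /\ e = 0 /\ m = 0)).
Proof.
move=> _ Ht HG Hs; split.
- by move=> Hc; have [] := canonical_typing_counters0 Ht HG Hs Hc.
- by case=> b0 [e0 m0]; have [] := typing_counters0_canonical Ht HG b0 e0 m0.
Qed.
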